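(* Fix $q\ge2$. Let $f$ be a real function on the positive integers such that $k(n):=\log_q n-f(n)$ is a positive integer for all sufficiently large $n$, and such that $n-2k(n)=\Theta(n)$. Then $\mathrm{red}(A_q(n,k(n)))=\Theta(q^{f(n)})$, i.e. there are constants $C_1,C_2>0$ with $C_1q^{f(n)}\le \mathrm{red}(A_q(n,k(n)))\le C_2 q^{f(n)}$ for all sufficiently large $n$.
   Context: $\Sigma_q=\{0,\dots,q-1\}$. A vector in $\Sigma_q^n$ is a $k$-RLL vector if $n<k$ or it contains no run of $k$ consecutive zeros. $A_q(n,k)$ is the set of $k$-RLL vectors of length $n$ over $\Sigma_q$. For $A\subseteq\Sigma_q^n$, its redundancy is $\mathrm{red}(A)=n-\log_q|A|$. The function $f$ may take negative values. *)

From mathcomp Require Import all_boot.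
From Stdlib Require Import Reals.

Set Implicit Arguments. Unset Strict Implicit. Unset Printing Implicit Defensive.

Definition is_rll (q n k : nat) (w : {ffun 'I_n -> 'I_q}) : bool :=
  (n < k) ||
  [forall i : 'I_n, (i + k <= n) ==>
      [exists j : 'I_n, (i <= j) && (j < i + k) && (nat_of_ord (w j) != 0)]].

Definition A_set (q n k : nat) : {set {ffun 'I_n -> 'I_q}} :=
  [set w | is_rll k w].

Definition logq (q : nat) (x : R) : R := (ln x / ln (INR q))%R.

Definition red (q n : nat) (A : {set {ffun 'I_n -> 'I_q}}) : R :=
  (INR n - logq q (INR #|A|))%R.

From Stdlib Require Import Lra Lia.
From mathcomp Require Import all_boot zify.
From Stdlib Require Import Reals.

(* Write a_n = |A_q(n,k)|.  Reading a word letter by letter while tracking the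
   current run of zeros gives a_n = q^n for n < k and the k-step recurrence
   a_(n+k) = (q-1) (a_n + ... + a_(n+k-1)).  A comparison principle for this
   recurrence bounds a_n above by C L^n and below by M^n as soon as L and M
   satisfy the matching characteristic inequalities; L = q (1 - 1/(2 q^k)) and
   M = q (1 - q^-k) qualify.  Hence n - log_q a_n is of order n q^-k, which is
   q^f(n) because k = log_q n - f(n); the lower bound uses n - k >= n/2. *)

Fixpoint rll_seq (k : nat) (s : seq nat) : bool :=
  if s is _ :: s' then ((k <= size s) ==> has (fun x : nat => x != 0) (take k s)) && rll_seq k s'
  else true.

Lemma rll_seqP k s : 0 < k ->
  reflect (forall i, i + k <= size s -> has (fun x : nat => x != 0) (take k (drop i s)))
          (rll_seq k s).
Proof.
move=> k_gt0; elim: s => [|y s IHs] /=; first by apply: ReflectT => i; lia.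
apply: (iffP andP) => [[head_ok /IHs tail_ok] [|i] /= hi|win].
- by rewrite (implyP head_ok) //; lia.
- move: hi; rewrite addSn ltnS => hi; exact: tail_ok.
split; first by apply/implyP => hk; apply: (win 0).
by apply/IHs => i hi; apply: (win i.+1); rewrite addSn ltnS.
Qed.

Lemma has_take_nseq_cons k m x t : x != 0 ->
  has (fun x : nat => x != 0) (take k (nseq m 0 ++ x :: t)) = (m < k).
Proof. by move=> nz_x; elim: m k => [|m IHm] [|k] //=; rewrite nz_x. Qed.

Lemma has_take_nseq k m : has (fun x : nat => x != 0) (take k (nseq m 0)) = false.
Proof. by elim: m k => [|m IHm] [|k] //=. Qed.

Lemma rll_seq_nseq_cons k r x t : 0 < k -> x != 0 ->
  rll_seq k (nseq r 0 ++ x :: t) = (r < k) && rll_seq k t.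
Proof.
move=> k_gt0 nz_x; elim: r => [|r IHr] /=.
  by rewrite (has_take_nseq_cons _ 0 _ _ nz_x) k_gt0 implybT.
rewrite -[0 :: _]/(nseq r.+1 0 ++ x :: t) has_take_nseq_cons // IHr size_cat size_nseq /=.
by case: (ltnP r.+1 k) => hr; [rewrite implybT ltnW | rewrite (leq_trans hr (leq_addr _ _))].
Qed.

Lemma rll_seq_nseq k r : 0 < k -> rll_seq k (nseq r 0) = (r < k).
Proof.
move=> k_gt0; elim: r => [|r IHr] //=.
rewrite -[0 :: _]/(nseq r.+1 0) has_take_nseq IHr size_nseq.
by case: (leqP k r.+1) => hr /=; lia.
Qed.

Definition word_seq {q n} (w : {ffun 'I_n -> 'I_q}) : seq nat :=
  map (@nat_of_ord q) (tuple_of_finfun w).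

Section Words.

Variables (q n : nat).
Implicit Type w : {ffun 'I_n -> 'I_q}.

Lemma size_word_seq w : size (word_seq w) = n.
Proof. by rewrite size_map size_tuple. Qed.

Lemma nth_word_seq w (i : 'I_n) : nth 0 (word_seq w) i = w i.
Proof.
rewrite /word_seq /= -map_comp (nth_map i) ?size_enum_ord //=.
by congr (nat_of_ord (w _)); apply: val_inj; rewrite /= nth_enum_ord.
Qed.

Lemma is_rll_word_seq k w : 0 < k -> is_rll k w = rll_seq k (word_seq w).
Proof.
move=> k_gt0; have size_w := size_word_seq w.
apply/idP/idP => [rll_w | /(rll_seqP _ _ k_gt0) win].
  apply/(rll_seqP _ _ k_gt0) => i; rewrite size_w => hi.
  case/orP: rll_w => [lt_n_k | win]; first lia.
  have lt_i_n : i < n by lia.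
  have /existsP[j /andP[/andP[le_ij lt_j] nz_j]] := implyP (forallP win (Ordinal lt_i_n)) hi.
  rewrite /= in le_ij lt_j.
  apply/(has_nthP 0); exists (j - i); first by rewrite size_take_min size_drop size_w; lia.
  by rewrite /= nth_take ?nth_drop ?subnKC ?(nth_word_seq w j) //; lia.
apply/orP; case: (ltnP n k) => hnk; [by left | right].
apply/forallP => i; apply/implyP => hi.
have /(has_nthP 0)[m hm nz_m] := win i (etrans (f_equal _ size_w) hi).
rewrite size_take_min size_drop size_w in hm.
have lt_im_n : i + m < n by lia.
have lt_m_k : m < k by lia.
apply/existsP; exists (Ordinal lt_im_n) => /=.
apply/andP; split; first lia.
by move: nz_m; rewrite /= nth_take // nth_drop (nth_word_seq w (Ordinal lt_im_n)).
Qed.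

End Words.

Lemma nseq_cat_cons0 r (s : seq nat) : nseq r 0 ++ 0 :: s = nseq r.+1 0 ++ s.
Proof. by elim: r => //= r ->. Qed.

Lemma card_pair_dep (T U : finType) (P : T -> U -> bool) :
  #|[set p : T * U | P p.1 p.2]| = \sum_(x : T) #|[set u | P x u]|.
Proof.
rewrite -sum1dep_card (eq_bigl (fun p : T * U => xpredT p.1 && P p.1 p.2)) //.
rewrite -(pair_big_dep xpredT P (fun _ _ => 1)) /=.
by apply: eq_bigr => x _; exact: sum1dep_card.
Qed.

Lemma card_tuple_cons (T : finType) n (P : seq T -> bool) :
  #|[set t : n.+1.-tuple T | P t]| = \sum_(x : T) #|[set t : n.-tuple T | P (x :: t)]|.
Proof.
rewrite -(@card_pair_dep _ _ (fun x (t : n.-tuple T) => P (x :: t))).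
pose cons_tuple (p : T * n.-tuple T) := [tuple of p.1 :: p.2].
have cons_inj : injective cons_tuple.
  by move=> [x t] [y u] /(congr1 val) /= [-> /val_inj ->].
rewrite -(card_imset _ cons_inj); apply: eq_card => t; rewrite inE.
apply/idP/imsetP => [Pt|[[x u]]]; last by rewrite inE /= => Pu ->.
exists (thead t, [tuple of behead t]); first by rewrite inE /=; move: Pt; rewrite {1}(tuple_eta t).
by apply: val_inj; rewrite /= [in LHS](tuple_eta t).
Qed.

Lemma card_set_andb (T : finType) (b : bool) (P : pred T) :
  #|[set t | b && P t]| = b * #|[set t | P t]|.
Proof. by case: b; rewrite ?mul1n ?mul0n //; apply: eq_card0 => t; rewrite inE. Qed.

Definition rll_count q k n r :=
  #|[set t : n.-tuple 'I_q | rll_seq k (nseq r 0 ++ map (@nat_of_ord q) t)]|.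

Section RllCount.

Variables (q k : nat).
Hypotheses (q_gt0 : 0 < q) (k_gt0 : 0 < k).

Lemma rll_count0 r : rll_count q k 0 r = (r < k).
Proof.
rewrite /rll_count (eq_finset (fun t => r < k)); last first.
  by move=> t; rewrite tuple0 /= cats0 rll_seq_nseq.
by case: (r < k); rewrite ?cardsT ?card_tuple ?cards0.
Qed.

Lemma rll_countS n r :
  rll_count q k n.+1 r = rll_count q k n r.+1 + (q - 1) * ((r < k) * rll_count q k n 0).
Proof.
case: q q_gt0 => // p _; rewrite /rll_count subn1 /=.
rewrite (@card_tuple_cons _ n (fun s => rll_seq k (nseq r 0 ++ map (@nat_of_ord p.+1) s))).
rewrite big_ord_recl /=.
congr (_ + _); first by apply: eq_card => t; rewrite !inE nseq_cat_cons0.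
set rll0 := #|[set t : n.-tuple 'I_p.+1 | rll_seq k (map (@nat_of_ord p.+1) t)]|.
rewrite (eq_bigr (fun _ => (r < k) * rll0)); first by rewrite sum_nat_const card_ord.
by move=> i _; rewrite -card_set_andb; apply: eq_card => t; rewrite !inE rll_seq_nseq_cons.
Qed.

Lemma rll_count_full n r : k <= r -> rll_count q k n r = 0.
Proof.
elim: n r => [|n IHn] r hr; first by rewrite rll_count0 ltnNge hr.
by rewrite rll_countS IHn ?ltnNge ?hr ?muln0 //; apply: leqW.
Qed.

Lemma rll_count_short n r : n + r < k -> rll_count q k n r = q ^ n.
Proof.
elim: n r => [|n IHn] r hr; first by rewrite rll_count0 hr.
have r_lt_k : r < k by lia.
rewrite rll_countS r_lt_k !IHn; try lia.
by rewrite mul1n -{1}[q ^ n]mul1n -mulnDl addnC subnK.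
Qed.

Lemma rll_count_window n m r : r + m = k ->
  rll_count q k (n + m) r = (q - 1) * \sum_(j < m) rll_count q k (n + j) 0.
Proof.
elim: m r => [|m IHm] r hrm.
  by rewrite big_ord0 muln0 addn0 rll_count_full // -hrm addn0.
have r_lt_k : r < k by lia.
rewrite addnS rll_countS IHm; last by rewrite addSnnS.
by rewrite r_lt_k mul1n big_ord_recr /= mulnDr.
Qed.

Lemma card_A_set n : #|A_set q n k| = rll_count q k n 0.
Proof.
rewrite -(card_imset _ (can_inj (@tuple_of_finfunK _ n))); apply: eq_card => t.
rewrite inE; apply/imsetP/idP => [[w] | rll_t].
  by rewrite inE is_rll_word_seq // => rll_w ->.
exists (finfun_of_tuple t); last by rewrite finfun_of_tupleK.
by rewrite inE is_rll_word_seq /word_seq ?finfun_of_tupleK.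
Qed.

Lemma card_A_set_short n : n < k -> #|A_set q n k| = q ^ n.
Proof. by move=> lt_n_k; rewrite card_A_set rll_count_short ?addn0. Qed.

Lemma card_A_set_rec n :
  #|A_set q (n + k) k| = (q - 1) * \sum_(j < k) #|A_set q (n + j) k|.
Proof.
rewrite card_A_set (@rll_count_window n k 0) //.
by congr (_ * _); apply: eq_bigr => j _; rewrite card_A_set.
Qed.

Lemma card_A_set_gt0 n : 1 < q -> 0 < #|A_set q n k|.
Proof.
move=> q_gt1; apply/card_gt0P; exists [ffun=> Ordinal q_gt1]; rewrite inE.
apply/orP; right; apply/forallP => i; apply/implyP => _.
by apply/existsP; exists i; rewrite ffunE leqnn -[X in X < _]addn0 ltn_add2l k_gt0.
Qed.

End RllCount.

Local Open Scope R_scope.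

Lemma ln_le x y : 0 < x -> x <= y -> ln x <= ln y.
Proof. by move=> x_gt0 [lt_xy | ->]; [apply/Rlt_le/ln_increasing | apply: Rle_refl]. Qed.

Lemma ln_1_sub_le d : d < 1 -> ln (1 - d) <= - d.
Proof.
move=> d_lt1; rewrite -(ln_exp (- d)); apply: ln_le; first lra.
by have := exp_ineq1_le (- d); lra.
Qed.

(* [exp (2 e) (1 - e) >= (1 + 2 e) (1 - e) >= 1] for [e <= 1/2]. *)
Lemma ln_1_sub_ge e : 0 <= e <= / 2 -> - (2 * e) <= ln (1 - e).
Proof.
move=> e_bnd; rewrite -(ln_exp (- (2 * e))); apply: ln_le; first exact: exp_pos.
rewrite exp_Ropp; have := exp_ineq1_le (2 * e); have := exp_pos (2 * e).
move=> exp_gt0 exp_ge; apply: (Rmult_le_reg_l (exp (2 * e))) => //.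
rewrite Rinv_r; nra.
Qed.

Lemma pow_1_sub_ge x m : 0 <= x <= 1 -> 1 - INR m * x <= (1 - x) ^ m.
Proof. by move=> x_bnd; elim: m => [|m IHm]; rewrite ?S_INR /=; [lra | have := pos_INR m; nra]. Qed.

Lemma mul_le_pow x k : 2 <= x -> (0 < k)%nat -> INR k * x <= x ^ k.
Proof.
move=> x_ge2; elim: k => [|k IHk] // _.
have [-> | k_gt0] := posnP k; first by rewrite /=; lra.
have k_ge1 : 1 <= INR k by apply: (le_INR 1); apply/leP.
have step : INR k + 1 <= INR k * x by nra.
have := Rmult_le_compat_l x _ _ ltac:(lra) (IHk k_gt0).
have := Rmult_le_compat_r x _ _ ltac:(lra) step.
rewrite S_INR /=; lra.
Qed.

Lemma recurrence_comparison k c (u v : nat -> R) : 0 <= c ->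
  (forall n, (n < k)%nat -> u n <= v n) ->
  (forall n, u (n + k)%nat <= c * \big[Rplus/0]_(j < k) u (n + j)%nat) ->
  (forall n, c * \big[Rplus/0]_(j < k) v (n + j)%nat <= v (n + k)%nat) ->
  forall n, u n <= v n.
Proof.
move=> c_ge0 base sub super; elim/ltn_ind => n IHn.
case: (ltnP n k) => [/base // | le_k_n]; rewrite -(subnK le_k_n).
apply: Rle_trans (sub _) (Rle_trans _ _ _ _ (super _)); apply: Rmult_le_compat_l => //.
apply: (big_ind2 Rle (Rle_refl 0) (fun _ _ _ _ => Rplus_le_compat _ _ _ _)) => j _.
by apply: IHn; rewrite -{2}(subnK le_k_n) ltn_add2l.
Qed.

Lemma geometric_window_sum x k n :
  (x - 1) * \big[Rplus/0]_(j < k) x ^ (n + j)%nat = x ^ (n + k)%nat - x ^ n.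
Proof.
elim: k n => [|k IHk] n; first by rewrite big_ord0 addn0; ring.
rewrite big_ord_recl Rmult_plus_distr_l addn0.
under eq_bigr => j _ do rewrite addnS -addSn.
by rewrite IHk addSnnS /=; ring.
Qed.

(* Multiplying by x - 1, [c * sum_(j < k) x ^ j <= x ^ k] becomes the
   characteristic inequality [x ^ k * (c + 1 - x) <= c]. *)
Lemma geometric_super c C x k : 1 < x -> 0 <= C -> x ^ k * (c + 1 - x) <= c ->
  forall n, c * \big[Rplus/0]_(j < k) (C * x ^ (n + j)%nat) <= C * x ^ (n + k)%nat.
Proof.
move=> x_gt1 C_ge0 char n.
rewrite -(big_morph (Rmult C) (Rmult_plus_distr_l C) (Rmult_0_r C)).
rewrite -Rmult_assoc (Rmult_comm c) Rmult_assoc; apply: Rmult_le_compat_l => //.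
have sum_eq := geometric_window_sum x k n.
set S := \big[Rplus/0]_(j < k) _ in sum_eq *; rewrite pow_add in sum_eq *.
have xn_gt0 : 0 < x ^ n by apply: pow_lt; lra.
have := Rmult_le_compat_l _ _ _ (Rlt_le _ _ xn_gt0) char.
move=> scaled_char; apply: (Rmult_le_reg_l (x - 1)); first lra.
have -> : (x - 1) * (c * S) = c * ((x - 1) * S) by ring.
rewrite sum_eq; lra.
Qed.

Lemma geometric_sub c x k : 1 < x -> c <= x ^ k * (c + 1 - x) ->
  forall n, x ^ (n + k)%nat <= c * \big[Rplus/0]_(j < k) x ^ (n + j)%nat.
Proof.
move=> x_gt1 char n; have sum_eq := geometric_window_sum x k n.
set S := \big[Rplus/0]_(j < k) _ in sum_eq *; rewrite pow_add in sum_eq *.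
have xn_gt0 : 0 < x ^ n by apply: pow_lt; lra.
have := Rmult_le_compat_l _ _ _ (Rlt_le _ _ xn_gt0) char.
move=> scaled_char; apply: (Rmult_le_reg_l (x - 1)); first lra.
have -> : (x - 1) * (c * S) = c * ((x - 1) * S) by ring.
rewrite sum_eq; lra.
Qed.

Section Count.

Variables (q k : nat).
Hypotheses (q_ge2 : (2 <= q)%nat) (k_gt0 : (0 < k)%nat).

Local Notation Q := (INR q).
Local Notation count n := (INR #|A_set q n k|).

Let q_gt0 : (0 < q)%nat. Proof. exact: ltnW. Qed.

Lemma Q_ge2 : 2 <= Q.
Proof. by have := le_INR 2 q (elimT leP q_ge2); rewrite /=; lra. Qed.

Lemma count_gt0 n : 0 < count n.
Proof. by apply: lt_0_INR; apply/ltP; apply: card_A_set_gt0. Qed.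

Lemma count_rec n : count (n + k) = (Q - 1) * \big[Rplus/0]_(j < k) count (n + j).
Proof.
rewrite card_A_set_rec // mult_INR minus_INR; last by apply/leP.
by rewrite (big_morph INR plus_INR (erefl (INR 0))).
Qed.

Lemma count_le_geometric L : 1 < L <= Q -> L ^ k * (Q - L) <= Q - 1 ->
  forall n, count n <= (Q / L) ^ k * L ^ n.
Proof.
move=> L_bnd char; have hQ := Q_ge2.
apply: (@recurrence_comparison k (Q - 1)) => [|n lt_n_k|n|]; first lra.
- rewrite card_A_set_short // pow_INR -[Q in Q ^ n](Rmult_1_r) -(Rinv_l L); last lra.
  rewrite -Rmult_assoc Rpow_mult_distr; apply: Rmult_le_compat_r; first by apply: pow_le; lra.
  apply: Rle_pow; last by apply/leP/ltnW.
  by apply: (Rmult_le_reg_r L); [lra | rewrite Rmult_assoc Rinv_l; lra].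
- by rewrite count_rec; apply: Rle_refl.
apply: geometric_super; first lra.
  by apply: pow_le; apply/Rlt_le/Rdiv_lt_0_compat; lra.
by rewrite (_ : Q - 1 + 1 - L = Q - L); last ring.
Qed.

Lemma count_ge_geometric M : 1 < M <= Q -> Q - 1 <= M ^ k * (Q - M) ->
  forall n, M ^ n <= count n.
Proof.
move=> M_bnd char; have hQ := Q_ge2.
apply: (@recurrence_comparison k (Q - 1)) => [|n lt_n_k|n|n]; first lra.
- by rewrite card_A_set_short // pow_INR; apply: pow_incr; lra.
- apply: geometric_sub; first lra.
  by rewrite (_ : Q - 1 + 1 - M = Q - M); last ring.
by rewrite count_rec; apply: Rle_refl.
Qed.

Lemma Q_le_pow : Q <= Q ^ k.
Proof.
have hQ := Q_ge2; have := mul_le_pow _ _ hQ k_gt0.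
have : 1 <= INR k by apply: (le_INR 1); apply/leP.
nra.
Qed.

Lemma ln_Q_gt0 : 0 < ln Q.
Proof. by rewrite -ln_1; apply: ln_increasing; have := Q_ge2; lra. Qed.

Lemma red_A_set_eq n : red (A_set q n k) = (INR n * ln Q - ln (count n)) / ln Q.
Proof. by rewrite /red /logq; field; have := ln_Q_gt0; lra. Qed.

Lemma red_A_set_ge n : (2 * k <= n)%nat -> / (4 * ln Q) * (INR n / Q ^ k) <= red (A_set q n k).
Proof.
move=> le_2k_n; have le_k_n : (k <= n)%nat by lia.
have hQ := Q_ge2; have hQk := Q_le_pow; have hlnQ := ln_Q_gt0.
set d := / (2 * Q ^ k); set L := Q * (1 - d).
have Qk_d : Q ^ k * d = / 2 by rewrite /d; field; lra.
have d_bnd : 0 < d <= / 4.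
  by split; [apply: Rinv_0_lt_compat | apply: Rinv_le_contravar]; lra.
have L_bnd : 1 < L <= Q by rewrite /L; nra.
have char : L ^ k * (Q - L) <= Q - 1.
  have : (1 - d) ^ k <= 1 by rewrite -{2}(pow1 k); apply: pow_incr; lra.
  have : 0 <= (1 - d) ^ k by apply: pow_le; lra.
  rewrite /L Rpow_mult_distr.
  have -> : Q ^ k * (1 - d) ^ k * (Q - Q * (1 - d)) = (1 - d) ^ k * Q * (Q ^ k * d) by ring.
  rewrite Qk_d; nra.
have count_le : count n <= Q ^ n * (1 - d) ^ (n - k).
  apply: (Rle_trans _ _ _ (count_le_geometric _ L_bnd char n)); apply: Req_le.
  rewrite -[in L ^ n](subnK le_k_n) -[in Q ^ n](subnK le_k_n) !pow_add.
  rewrite /Rdiv /L !Rpow_mult_distr !pow_inv Rpow_mult_distr; clearbody d; field.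
  by split; apply: pow_nonzero; lra.
have k_le_half_n : 2 * INR k <= INR n.
  by rewrite (_ : 2 * INR k = INR (2 * k)); [apply/le_INR/leP | rewrite mult_INR /=; ring].
have ln_count_le : ln (count n) <= INR n * ln Q - (INR n - INR k) * d.
  apply: (Rle_trans _ _ _ (ln_le _ _ (count_gt0 n) count_le)).
  rewrite ln_mult; try (apply: pow_lt; lra).
  rewrite !ln_pow ?minus_INR; try lra; last by apply/leP.
  have := ln_1_sub_le d ltac:(lra); have : 0 <= INR n - INR k by have := pos_INR k; lra.
  nra.
rewrite red_A_set_eq.
have -> : / (4 * ln Q) * (INR n / Q ^ k) = INR n * d / 2 / ln Q.
  by rewrite /d; field; split; lra.
by apply: Rmult_le_compat_r; [apply/Rlt_le/Rinv_0_lt_compat | nra].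
Qed.

Lemma red_A_set_le n : red (A_set q n k) <= (Q + 2 / ln Q) * (INR n / Q ^ k).
Proof.
have hQ := Q_ge2; have hQk := Q_le_pow; have hlnQ := ln_Q_gt0.
have ln_count_ge0 : 0 <= ln (count n).
  rewrite -ln_1; apply: ln_le; first lra.
  by apply: (le_INR 1); apply/leP; apply: card_A_set_gt0.
set e := / Q ^ k.
have e_gt0 : 0 < e by apply: Rinv_0_lt_compat; lra.
have n_e_ge0 : 0 <= INR n * e by apply: Rmult_le_pos; [apply: pos_INR | lra].
have e_div : INR n / Q ^ k = INR n * e by [].
rewrite red_A_set_eq e_div.
have -> : (INR n * ln Q - ln (count n)) / ln Q = INR n - ln (count n) / ln Q.
  by field; lra.
have ln_ratio_ge0 : 0 <= ln (count n) / ln Q.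
  by apply: Rmult_le_pos => //; apply/Rlt_le/Rinv_0_lt_compat.
have ln_term_ge0 : 0 <= 2 / ln Q * (INR n * e).
  by apply: Rmult_le_pos => //; apply/Rlt_le/Rdiv_lt_0_compat; lra.
rewrite Rmult_plus_distr_r.
(* For k = 1 and q = 2 the lower ratio q (1 - q^-k) below degenerates to 1. *)
have [k_eq1 | k_ge2] : k = 1%nat \/ (2 <= k)%nat by lia.
  have -> : Q * (INR n * e) = INR n by rewrite /e k_eq1 /=; field; lra.
  lra.
have Qk_e : Q ^ k * e = 1 by rewrite /e; field; lra.
have kQ_le : INR k * Q <= Q ^ k := mul_le_pow _ _ hQ k_gt0.
have k_ge2R : 2 <= INR k by have := le_INR 2 k (elimT leP k_ge2); rewrite /=; lra.
have Qe_le : Q * e <= / 2.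
  by apply: (Rmult_le_reg_r (Q ^ k)); [lra | rewrite Rmult_assoc (Rmult_comm e) Qk_e; nra].
set M := Q * (1 - e).
have M_bnd : 1 < M <= Q by rewrite /M; nra.
have char : Q - 1 <= M ^ k * (Q - M).
  rewrite /M Rpow_mult_distr.
  have -> : Q ^ k * (1 - e) ^ k * (Q - Q * (1 - e)) = (1 - e) ^ k * Q * (Q ^ k * e) by ring.
  have := pow_1_sub_ge e k ltac:(nra).
  have : INR k * Q * e <= 1 by rewrite -Qk_e; apply: Rmult_le_compat_r; lra.
  rewrite Qk_e; nra.
have ln_count_ge : INR n * ln Q - 2 * e * INR n <= ln (count n).
  have M_pow_gt0 : 0 < M ^ n by apply: pow_lt; lra.
  apply: Rle_trans (ln_le _ _ M_pow_gt0 (count_ge_geometric _ M_bnd char n)).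
  have e_lt1 : e < 1 by nra.
  rewrite ln_pow ?ln_mult; try lra.
  have := ln_1_sub_ge e ltac:(nra); have := pos_INR n; nra.
have : INR n - ln (count n) / ln Q <= 2 / ln Q * (INR n * e).
  apply: (Rmult_le_reg_r (ln Q)) => //.
  have -> : (INR n - ln (count n) / ln Q) * ln Q = INR n * ln Q - ln (count n) by field; lra.
  have -> : 2 / ln Q * (INR n * e) * ln Q = 2 * e * INR n by field; lra.
  lra.
have : 0 <= Q * (INR n * e) by apply: Rmult_le_pos; lra.
lra.
Qed.

End Count.

Lemma Rpower_logq_sub q x y K : (1 < q)%nat -> 0 < x -> INR K = logq q x - y ->
  Rpower (INR q) y = x / INR q ^ K.
Proof.
move=> q_gt1 x_gt0 K_eq.
have lnQ_gt0 := ln_Q_gt0 _ q_gt1.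
have -> : y = ln x / ln (INR q) - INR K by rewrite K_eq /logq; ring.
rewrite /Rpower Rmult_minus_distr_r (_ : ln x / ln (INR q) * ln (INR q) = ln x); last by field; lra.
rewrite /Rminus exp_plus exp_ln // exp_Ropp -(Rpower_pow K) //.
by apply/lt_0_INR/ltP/ltnW.
Qed.

Theorem corollary1 (q : nat) (hq : (2 <= q)%nat) (f : nat -> R) (k : nat -> nat)
  (hk : exists N : nat, forall n : nat, (N <= n)%nat ->
          (0 < k n)%nat /\ INR (k n) = (logq q (INR n) - f n)%R)
  (htheta : exists c1 c2 : R, (0 < c1)%R /\ (0 < c2)%R /\
          exists N : nat, forall n : nat, (N <= n)%nat ->
            (c1 * INR n <= INR n - 2 * INR (k n) <= c2 * INR n)%R) :
  exists C1 C2 : R, (0 < C1)%R /\ (0 < C2)%R /\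
    exists N : nat, forall n : nat, (N <= n)%nat ->
      (C1 * Rpower (INR q) (f n) <= red (A_set q n (k n))
        <= C2 * Rpower (INR q) (f n))%R.
Proof.
case: hk => N1 hN1; case: htheta => c1 [c2 [c1_gt0 [_ [N2 hN2]]]].
have lnQ_gt0 := ln_Q_gt0 _ hq; have hQ := Q_ge2 _ hq.
exists (/ (4 * ln (INR q))), (INR q + 2 / ln (INR q)).
split; first by apply: Rinv_0_lt_compat; lra.
split; first by have := Rdiv_lt_0_compat 2 _ ltac:(lra) lnQ_gt0; lra.
exists (maxn N1 N2) => n; rewrite geq_max => /andP[/hN1[k_gt0 k_eq] /hN2[theta_lo _]].
have le_2k_n : (2 * k n <= n)%nat.
  by apply/leP/INR_le; rewrite mult_INR /=; have := pos_INR n; nra.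
have n_gt0 : 0 < INR n by apply/lt_0_INR/ltP; lia.
rewrite (Rpower_logq_sub _ _ _ _ hq n_gt0 k_eq).
by split; [apply: red_A_set_ge | apply: red_A_set_le].
Qed.
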